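(* Let $K$ be a field of characteristic zero, $L$ a $K$-linear functional on $K[u]$ with moments $\mu_s=L(u^s)$, and assume that all Hankel determinants $H(n)=\det_{0\le i,j\le n-1}(\mu_{i+j})$, $n\ge0$, are non-zero. Let $k,m,n$ be non-negative integers and $x_1,\dots,x_m,y_1,\dots,y_k$ variables. Then the determinant $$\det_{0\le i,j\le n-1}\left(\int u^{i+j}\frac{\prod_{\ell=1}^m(u-x_\ell)}{\prod_{\ell=1}^k(u-y_\ell)}\,d\mu(u)\right)$$ does not vanish identically.
   Context: $\int f(u)\,d\mu(u)$ denotes $L(f)$; the factors $\frac1{u-y_\ell}$ are expanded as $-\sum_{i\ge0}u^iy_\ell^{-i-1}$ (formal power series in $1/y_\ell$) and $L$ is applied coefficientwise, so the determinant is a formal series in $x_1,\dots,x_m$ and $1/y_1,\dots,1/y_k$ (alternatively the integrals may be read analytically for a measure $d\mu$). *)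

(* Formal power series in N variables over a ring R are
   represented by their coefficient functions (multi-index -> R). *)
From HB Require Import structures.
From mathcomp Require Import all_boot all_order all_algebra all_fingroup.
Set Implicit Arguments. Unset Strict Implicit. Unset Printing Implicit Defensive.
Import Order.TTheory GRing.Theory Num.Theory.
Local Open Scope ring_scope.

Definition mon (N : nat) := 'I_N -> nat.
Definition series (R : Type) (N : nat) := mon N -> R.

Definition mon_bnd N (a : mon N) : nat := (\max_(j < N) a j)%N.

Section Series.
Variables (R : nzRingType) (N : nat).
Implicit Types (f g : series R N) (a : mon N).

Definition sconst (c : R) : series R N :=
  fun a => if [forall j, a j == 0%N] then c else 0.
Definition svar (t : 'I_N) : series R N :=
  fun a => if [forall j, a j == (j == t : nat)] then 1 else 0.
Definition sadd f g : series R N := fun a => f a + g a.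
Definition sopp f : series R N := fun a => - f a.
(* Cauchy product: coefficient at a is the sum over b <= a of f_b g_(a-b) *)
Definition smul f g : series R N := fun a =>
  \sum_(b : {ffun 'I_N -> 'I_(mon_bnd a).+1} | [forall j, (b j <= a j)%N])
     f (fun j => nat_of_ord (b j)) * g (fun j => (a j - b j)%N).
Definition sprod (s : seq (series R N)) : series R N := foldr smul (sconst 1) s.
End Series.

Definition Lfun (K : fieldType) (mu : nat -> K) (p : {poly K}) : K :=
  \sum_(s < size p) p`_s * mu s.

Definition hankel (K : fieldType) (mu : nat -> K) (n : nat) : K :=
  \det (\matrix_(i < n, j < n) mu (i + j)%N).

Section Integrand.
Variables (K : fieldType) (m k : nat).
Local Notation N := (m + k)%N.
(* variables: x_l = variable lshift k l ; z_l := 1/y_l = variable rshift m l *)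
Definition xvar (l : 'I_m) : 'I_N := lshift k l.
Definition zvar (l : 'I_k) : 'I_N := rshift m l.

Definition lin_factor (l : 'I_m) : series {poly K} N :=
  sadd (@sconst _ N 'X) (sopp (@svar {poly K} N (xvar l))).
(* the expansion 1/(u - y_l) = - sum_{i>=0} u^i y_l^{-i-1} = - sum_i u^i z_l^{i+1} *)
Definition inv_factor (l : 'I_k) : series {poly K} N := fun a =>
  if [forall t, (t != zvar l) ==> (a t == 0%N)] && (0 < a (zvar l))%N
  then - 'X^((a (zvar l)).-1) else 0.

Definition integrand (i j : nat) : series {poly K} N :=
  smul (@sconst _ N ('X^(i + j)))
       (smul (sprod [seq lin_factor l | l <- enum 'I_m])
             (sprod [seq inv_factor l | l <- enum 'I_k])).

Definition moment_entry (mu : nat -> K) (i j : nat) : series K N :=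
  fun a => Lfun mu (integrand i j a).

Definition sdet (n : nat) (A : 'I_n -> 'I_n -> series K N) : series K N :=
  fun a => \sum_(s : 'S_n) (-1) ^+ s * sprod [seq A i (s i) | i <- enum 'I_n] a.
End Integrand.

(** Call a series [f] cornered at the monomial [B] (with respect to a set [P]
   of variables) if every monomial in its support has exponents [<= B] on [P]
   and [>= B] off [P].  Corners add under the Cauchy product, and the
   coefficient of the product at the sum of the corners is the product of the
   corner coefficients.  Taking [P] to be the [x]-variables, [u - x_l] is
   cornered at [x_l] with coefficient [-1], and
   [1/(u - y_l) = - sum_i u^i z_l^(i+1)] (with [z_l = 1/y_l]) is cornered at
   [z_l] with coefficient [-1].  Hence the integrand is cornered at
   [x_1 ... x_m z_1 ... z_k] with coefficient [(-1)^(m+k) u^(i+j)], and the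
   coefficient of [(x_1 ... x_m z_1 ... z_k)^n] in the determinant is
   [(-1)^((m+k) n) H(n) <> 0]. *)

From HB Require Import structures.
From mathcomp Require Import all_boot all_order all_algebra all_fingroup.
From mathcomp Require Import zify.
From Stdlib Require Import FunctionalExtensionality.
Set Implicit Arguments. Unset Strict Implicit. Unset Printing Implicit Defensive.
Import Order.TTheory GRing.Theory Num.Theory.
Local Open Scope ring_scope.

Section Corner.
Variables (R : nzRingType) (N : nat) (P : pred 'I_N).
Implicit Types (f g : series R N) (a b B : mon N).

Definition mixed_le a B : bool :=
  [forall j, if P j then (a j <= B j)%N else (B j <= a j)%N].

Definition has_corner f B : Prop := forall a, ~~ mixed_le a B -> f a = 0.

Lemma corner_mul_eq0 f g B1 B2 a b :
  has_corner f B1 -> has_corner g B2 ->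
  ~~ (mixed_le a B1 && mixed_le b B2) -> f a * g b = 0.
Proof.
move=> hf hg; rewrite negb_and => /orP[na|nb]; first by rewrite hf ?mul0r.
by rewrite hg ?mulr0.
Qed.

Lemma smul_has_corner f g B1 B2 B : (forall j, B j = B1 j + B2 j)%N ->
  has_corner f B1 -> has_corner g B2 -> has_corner (smul f g) B.
Proof.
move=> HB hf hg a na; rewrite /smul big1 // => b /forallP le_ba.
apply: corner_mul_eq0 hf hg _; apply: contra na => /andP[/forallP h1 /forallP h2].
apply/forallP => j; move: (h1 j) (h2 j) (le_ba j); rewrite HB.
by case: (P j) => /=; lia.
Qed.

Lemma smul_corner_coef f g B1 B2 B : (forall j, B j = B1 j + B2 j)%N ->
  has_corner f B1 -> has_corner g B2 -> smul f g B = f B1 * g B2.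
Proof.
move=> HB hf hg; rewrite /smul.
have B1_small j : (B1 j < (mon_bnd B).+1)%N.
  by rewrite ltnS (leq_trans _ (leq_bigmax j)) // HB leq_addr.
pose b1 : {ffun 'I_N -> 'I_(mon_bnd B).+1} := [ffun j => Ordinal (B1_small j)].
rewrite (bigD1 b1) /=; last by apply/forallP => j; rewrite ffunE /= HB leq_addr.
rewrite big1 ?addr0 => [|b /andP[/forallP le_bB b_neq]].
  congr (f _ * g _); apply: functional_extensionality => j; rewrite ffunE //=.
  by rewrite HB addKn.
apply: corner_mul_eq0 hf hg _; apply: contra b_neq => /andP[/forallP h1 /forallP h2].
apply/eqP/ffunP => j; apply/val_inj; rewrite ffunE /=.
move: (h1 j) (h2 j) (le_bB j); rewrite HB.
by case: (P j) => /=; lia.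
Qed.

Lemma sconst_has_corner (c : R) : has_corner (@sconst R N c) (fun _ => 0%N).
Proof.
move=> a /forallPn[j not_le]; rewrite /sconst; case: ifP => // /forallP a0.
by move: not_le; rewrite (eqP (a0 j)); case: (P j).
Qed.

Lemma sconst_coef0 (c : R) B : (forall j, B j = 0%N) -> @sconst R N c B = c.
Proof. by move=> B0; rewrite /sconst ifT //; apply/forallP => j; rewrite B0. Qed.

Variables (I : Type) (F : I -> series R N) (BF : I -> mon N).
Hypothesis F_corner : forall i, has_corner (F i) (BF i).

Lemma sprod_has_corner (s : seq I) B : (forall j, B j = \sum_(i <- s) BF i j)%N ->
  has_corner (sprod [seq F i | i <- s]) B.
Proof.
elim: s B => [|i s IH] B HB.
  move=> a na; apply: sconst_has_corner; apply: contra na => /forallP le_a0.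
  by apply/forallP => j; rewrite HB big_nil; apply: le_a0.
have HB' j : B j = (BF i j + \sum_(i <- s) BF i j)%N by rewrite HB big_cons.
exact: (smul_has_corner HB' (@F_corner i) (IH _ (fun j => erefl))).
Qed.

Lemma sprod_corner_coef (s : seq I) B : (forall j, B j = \sum_(i <- s) BF i j)%N ->
  sprod [seq F i | i <- s] B = \prod_(i <- s) F i (BF i).
Proof.
elim: s B => [|i s IH] B HB.
  by rewrite big_nil; apply: sconst_coef0 => j; rewrite HB big_nil.
rewrite big_cons -(IH (fun j => \sum_(i <- s) BF i j)%N) //.
have HB' j : B j = (BF i j + \sum_(i <- s) BF i j)%N by rewrite HB big_cons.
exact: (smul_corner_coef HB' (@F_corner i) (sprod_has_corner (fun j => erefl))).
Qed.

End Corner.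

Lemma sdet_corner_coef (K : fieldType) (m k n : nat) (P : pred 'I_(m + k))
    (A : 'I_n -> 'I_n -> series K (m + k)) (B C : mon (m + k)) :
  (forall i j, has_corner P (A i j) B) -> (forall t, C t = n * B t)%N ->
  sdet A C = \det (\matrix_(i, j) A i j B).
Proof.
move=> A_corner HC; rewrite /sdet /determinant; apply: eq_bigr => s _.
rewrite (sprod_corner_coef (fun i => A_corner i (s i))) => [|t]; last first.
  by rewrite HC big_enum /= sum_nat_const card_ord.
by rewrite big_enum; congr (_ * _); apply: eq_bigr => i _; rewrite !mxE.
Qed.

Lemma Lfun_scale (K : fieldType) (mu : nat -> K) (c : K) (p : {poly K}) :
  Lfun mu (c *: p) = c * Lfun mu p.
Proof.
rewrite /Lfun (big_ord_widen _ (fun s => (c *: p)`_s * mu s) (size_scale_leq c p)).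
rewrite big_mkcond big_distrr /=; apply: eq_bigr => s _.
by rewrite mulrA -coefZ; case: ltnP => // le_s; rewrite nth_default ?mul0r.
Qed.

Lemma Lfun_Xn (K : fieldType) (mu : nat -> K) (d : nat) : Lfun mu 'X^d = mu d.
Proof.
rewrite /Lfun size_polyXn big_ord_recr /= coefXn eqxx mul1r big1 ?add0r // => s _.
by rewrite coefXn ltn_eqF // mul0r.
Qed.

Section Integrand.
Variables (K : fieldType) (m k : nat).

Definition is_xvar (j : 'I_(m + k)) : bool := (j < m)%N.
Definition xmon (l : 'I_m) : mon (m + k) := fun j => (j == xvar k l : nat).
Definition zmon (l : 'I_k) : mon (m + k) := fun j => (j == zvar m l : nat).

Lemma lin_factor_has_corner l : has_corner is_xvar (lin_factor K l) (xmon l).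
Proof.
have x_lt_m : is_xvar (xvar k l) by rewrite /is_xvar /= ltn_ord.
move=> a /forallPn[j]; rewrite /xmon; case: ifP => [_|j_ge]; rewrite -ltnNge => lt_a.
  rewrite /lin_factor /sadd /sopp /sconst /svar !ifF ?oppr0 ?addr0 //.
    by apply/negP => /forallP/(_ j)/eqP a_j; move: lt_a; rewrite a_j ltnn.
  by apply/negP => /forallP/(_ j)/eqP a_j; move: lt_a; rewrite a_j ltn0.
by move: lt_a; case: eqP => // j_x; move: j_ge; rewrite j_x x_lt_m.
Qed.

Lemma lin_factor_corner_coef l : lin_factor K l (xmon l) = -1.
Proof.
rewrite /lin_factor /sadd /sopp /sconst /svar ifF ?ifT ?add0r //; first exact/forallP.
by apply/negP => /forallP/(_ (xvar k l)); rewrite /xmon eqxx.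
Qed.

Lemma inv_factor_has_corner l : has_corner is_xvar (inv_factor K l) (zmon l).
Proof.
have z_ge_m : ~~ is_xvar (zvar m l) by rewrite /is_xvar /= -leqNgt leq_addr.
move=> a /forallPn[j]; rewrite /inv_factor /zmon; case: ifP => [j_lt|_].
  have j_neq : j != zvar m l by apply: contraTneq j_lt => ->.
  rewrite (negbTE j_neq) -ltnNge => a_pos; rewrite ifF //.
  apply/negP => /andP[/forallP/(_ j)]; rewrite j_neq /= => /eqP a_j.
  by rewrite a_j in a_pos.
rewrite -ltnNge; case: eqP => [<-|] //.
by rewrite ltnS leqn0 => /eqP ->; rewrite andbF.
Qed.

Lemma inv_factor_corner_coef l : inv_factor K l (zmon l) = -1.
Proof.
rewrite /inv_factor /zmon eqxx andbT ifT ?expr0 //.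
by apply/forallP => t; apply/implyP => /negbTE ->.
Qed.

Lemma sum_xmon_zmon t :
  (\sum_(l <- enum 'I_m) xmon l t + \sum_(l <- enum 'I_k) zmon l t)%N = 1%N.
Proof.
rewrite !big_enum /= /xmon /zmon /xvar /zvar -[t]splitK; case: (split t) => i /=.
  rewrite (bigD1 i) //= eqxx big1 => [|l /negbTE l_neq]; last first.
    by rewrite (inj_eq (@lshift_inj _ _)) eq_sym l_neq.
  by rewrite big1 // => l _; rewrite eq_lrshift.
rewrite big1 => [|l _]; last by rewrite eq_rlshift.
rewrite (bigD1 i) //= eqxx big1 // => l /negbTE l_neq.
by rewrite (inj_eq (@rshift_inj _ _)) eq_sym l_neq.
Qed.

Local Notation lin_prod := (sprod [seq lin_factor K l | l <- enum 'I_m]).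
Local Notation inv_prod := (sprod [seq inv_factor K l | l <- enum 'I_k]).
Local Notation xmon_sum := (fun t => \sum_(l <- enum 'I_m) xmon l t)%N.
Local Notation zmon_sum := (fun t => \sum_(l <- enum 'I_k) zmon l t)%N.

Lemma lin_prod_has_corner : has_corner is_xvar lin_prod xmon_sum.
Proof. exact: (sprod_has_corner lin_factor_has_corner (fun t => erefl)). Qed.

Lemma inv_prod_has_corner : has_corner is_xvar inv_prod zmon_sum.
Proof. exact: (sprod_has_corner inv_factor_has_corner (fun t => erefl)). Qed.

Lemma lin_prod_corner_coef : lin_prod xmon_sum = (-1) ^+ m.
Proof.
rewrite (sprod_corner_coef lin_factor_has_corner) //.
by under eq_bigr do rewrite lin_factor_corner_coef; rewrite big_enum prodr_const card_ord.
Qed.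

Lemma inv_prod_corner_coef : inv_prod zmon_sum = (-1) ^+ k.
Proof.
rewrite (sprod_corner_coef inv_factor_has_corner) //.
by under eq_bigr do rewrite inv_factor_corner_coef; rewrite big_enum prodr_const card_ord.
Qed.

Lemma lin_inv_prod_has_corner :
  has_corner is_xvar (smul lin_prod inv_prod) (fun _ => 1%N).
Proof.
exact: (smul_has_corner (fun t => esym (sum_xmon_zmon t))
          lin_prod_has_corner inv_prod_has_corner).
Qed.

Lemma lin_inv_prod_corner_coef : smul lin_prod inv_prod (fun _ => 1%N) = (-1) ^+ (m + k).
Proof.
rewrite (smul_corner_coef (fun t => esym (sum_xmon_zmon t))
          lin_prod_has_corner inv_prod_has_corner).
by rewrite lin_prod_corner_coef inv_prod_corner_coef exprD.
Qed.

Lemma integrand_has_corner i j :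
  has_corner is_xvar (@integrand K m k i j) (fun _ => 1%N).
Proof.
exact: (smul_has_corner (B1 := fun _ => 0%N) (fun t => erefl)
          (@sconst_has_corner _ _ _ _) lin_inv_prod_has_corner).
Qed.

Lemma integrand_corner_coef i j :
  @integrand K m k i j (fun _ => 1%N) = (-1) ^+ (m + k) *: 'X^(i + j).
Proof.
rewrite /integrand (smul_corner_coef (B1 := fun _ => 0%N) (fun t => erefl)
          (@sconst_has_corner _ _ _ _) lin_inv_prod_has_corner).
by rewrite sconst_coef0 // lin_inv_prod_corner_coef mulrC -mul_polyC rmorph_sign.
Qed.

Lemma moment_entry_has_corner mu i j :
  has_corner is_xvar (@moment_entry K m k mu i j) (fun _ => 1%N).
Proof.
by move=> a na; rewrite /moment_entry integrand_has_corner // /Lfun size_poly0 big_ord0.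
Qed.

Lemma moment_entry_corner_coef mu i j :
  @moment_entry K m k mu i j (fun _ => 1%N) = (-1) ^+ (m + k) * mu (i + j)%N.
Proof. by rewrite /moment_entry integrand_corner_coef Lfun_scale Lfun_Xn. Qed.

End Integrand.

Theorem lemma10 (K : fieldType) (mu : nat -> K)
  (char0 : [pchar K] =i pred0)
  (hank : forall n : nat, hankel mu n != 0)
  (k m n : nat) :
  exists a : mon (m + k),
    sdet (fun i j : 'I_n => @moment_entry K m k mu i j) a != 0.
Proof.
exists (fun _ => n).
rewrite (sdet_corner_coef (fun i j => moment_entry_has_corner mu i j)) => [|t];
  last by rewrite muln1.
have -> : \matrix_(i, j) @moment_entry K m k mu i j (fun _ => 1%N)
          = (-1) ^+ (m + k) *: \matrix_(i < n, j < n) mu (i + j)%N.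
  by apply/matrixP => i j; rewrite !mxE moment_entry_corner_coef.
by rewrite detZ -exprM mulf_neq0 ?signr_eq0 //; apply: hank.
Qed.
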